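(* Let $m>n\ge1$ be integers. The filter class generated by $\mathbf{B}_m\times\mathbf{B}_n=\langle\mathbf{2}^m\times\mathbf{2}^n,\;P_m\times P_n\rangle$ consists precisely of the structures $\langle\mathbf{A},F\rangle$ where $\mathbf{A}$ is a Boolean algebra and $F$ is a non-empty $m$-filter on $\mathbf{A}$ which is either equal to $\mathbf{A}$ or contained in some $n$-filter $G\neq\mathbf{A}$. Equivalently, it is the subclass of $\mathsf{BA}_m$ consisting of those $\langle\mathbf{A},F\rangle$ satisfying, for every $k\ge n$ and all $x_1,\dots,x_k\in\mathbf{A}$: if $\bigwedge\Phi\in F$ for every $\Phi\subseteq_n\Delta_k$, where $\Delta_k=\{x_1,\dots,x_k,\neg(x_1\wedge\dots\wedge x_k)\}$, then $0\in F$.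
   Context: $\mathbf{2}^n$ denotes the Boolean algebra with $n$ atoms and $P_n$ its set of non-zero elements. Structures are pairs $\langle\mathbf{A},F\rangle$ with $\mathbf{A}$ a Boolean algebra and $F\subseteq\mathbf{A}$. A homomorphism $h\colon\langle\mathbf{A},F\rangle\to\langle\mathbf{B},G\rangle$ is strict if $F=h^{-1}[G]$. A filter class is a class closed under isomorphism, substructures $\langle\mathbf{B},F\cap\mathbf{B}\rangle$, products $\langle\prod\mathbf{A}_i,\prod F_i\rangle$ and strict homomorphic preimages (along surjective strict homomorphisms); the filter class generated by a structure is the smallest one containing it. For a set $X$, $Y\subseteq_nX$ means $Y$ non-empty, $Y\subseteq X$, $|Y|\le n$. An $n$-filter is an upset $F$ such that for every non-empty finite $X\subseteq F$, if $\bigwedge Y\in F$ for all $Y\subseteq_nX$ then $\bigwedge X\in F$. $\mathsf{BA}_m$ is the class of all $\langle\mathbf{A},F\rangle$ with $F$ a non-empty $m$-filter. *)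

(* Boolean algebras are MathComp's complemented distributive
   lattices with top and bottom ([ctbDistrLatticeType]). *)
From mathcomp Require Import all_boot all_order.
Unset Printing Implicit Defensive.
Import Order.Theory Order.DefaultSetSubsetOrder.
Local Open Scope order_scope.

Record structure := Structure {
  sdisp : Order.disp_t;
  salg : ctbDistrLatticeType sdisp;
  sfilt : salg -> Prop }.

Definition is_ba_hom {d1 d2 : Order.disp_t} {A : ctbDistrLatticeType d1}
  {B : ctbDistrLatticeType d2} (h : A -> B) : Prop :=
  (forall x y, h (x `&` y) = h x `&` h y) /\
  (forall x y, h (x `|` y) = h x `|` h y) /\
  (forall x, h (~` x) = ~` h x) /\
  h \bot = \bot /\ h \top = \top.

Definition strict_map (S T : structure) (h : salg S -> salg T) : Prop :=
  forall x, sfilt S x <-> sfilt T (h x).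

Definition embeds_into (S T : structure) : Prop :=
  exists h : salg S -> salg T, is_ba_hom h /\ injective h /\ strict_map S T h.

Definition strict_preimage_of (S T : structure) : Prop :=
  exists h : salg S -> salg T,
    is_ba_hom h /\ (forall y, exists x, h x = y) /\ strict_map S T h.

Definition is_product_of (S : structure) (I : Type) (T : I -> structure) : Prop :=
  exists p : forall i, salg S -> salg (T i),
    (forall i, is_ba_hom (p i)) /\
    (forall f : forall i, salg (T i), exists a, (forall i, p i a = f i) /\
       forall b, (forall i, p i b = f i) -> b = a) /\
    (forall a, sfilt S a <-> forall i, sfilt (T i) (p i a)).

Definition filter_class_closed (K : structure -> Prop) : Prop :=
  (forall S T, K T -> embeds_into S T -> K S) /\
  (forall S T, K T -> strict_preimage_of S T -> K S) /\
  (forall S (I : Type) (T : I -> structure),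
      (forall i, K (T i)) -> is_product_of S I T -> K S).

Definition gen_filter_class (S0 : structure) (S : structure) : Prop :=
  forall K : structure -> Prop, filter_class_closed K -> K S0 -> K S.

Section Filters.
Context {d : Order.disp_t} {A : ctbDistrLatticeType d}.

Definition is_upset (F : A -> Prop) : Prop :=
  forall x y, x <= y -> F x -> F y.

(* Finite subsets are represented by lists (repetitions are harmless:
   a list of length <= k has at most k distinct elements). *)
Definition is_nfilter (k : nat) (F : A -> Prop) : Prop :=
  is_upset F /\
  forall X : seq A, X != [::] -> (forall x, x \in X -> F x) ->
    (forall Y : seq A, Y != [::] -> {subset Y <= X} -> (size Y <= k)%N ->
        F (\meet_(y <- Y) y)) ->
    F (\meet_(x <- X) x).

Definition Delta (xs : seq A) : seq A := (~` \meet_(x <- xs) x) :: xs.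
End Filters.

Definition BmBn (m n : nat) : structure :=
  @Structure _ ({set 'I_m} *p {set 'I_n})%type
    (fun x => x.1 != \bot /\ x.2 != \bot).

(* The structures whose F is a non-empty m-filter, total or contained in a
   proper n-filter, form a filter class containing B_m x B_n.  Such an F
   satisfies the Delta-condition, since a proper n-filter containing F would
   contain the meet 0 of a Delta_k.

   Conversely, let F be a non-empty m-filter satisfying the Delta-condition.
   If a is not in F, the m-filter rule shows that every finite subset of F is
   covered by at most m nonzero atoms, below ~a, of the finite subalgebra it
   generates; the Delta-condition gives a cover by at most n nonzero atoms.
   Zorn's lemma turns these finite covers into m ultrafilters containing ~a,
   resp. n ultrafilters, whose unions contain F.  Membership in them defines
   a homomorphism into B_m x B_n that maps F into P_m x P_n but not a.  Those
   homomorphisms, together with the ones induced by single ultrafilters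
   (which separate points), embed <A, F> strictly into a power of B_m x B_n
   whose factors carry either the filter P_m x P_n or the total filter. *)

From mathcomp Require Import all_boot all_order.
From mathcomp Require Import boolp classical_sets.
Import Order.Theory Order.DefaultSetSubsetOrder.
Local Open Scope order_scope.

Set Implicit Arguments.
Unset Strict Implicit.
Unset Printing Implicit Defensive.

(** * Atoms of finite subalgebras and small covers *)

Section BooleanAlgebra.
Context {d : Order.disp_t} {A : ctbDistrLatticeType d}.
Implicit Types (a c x y z : A) (xs ys P K : seq A).

Lemma meetx_joins (T : Type) (s : seq T) (Q : pred T) (F : T -> A) z :
  z `&` \join_(q <- s | Q q) F q = \join_(q <- s | Q q) (z `&` F q).
Proof.
elim: s => [|q s IH]; first by rewrite !big_nil meetx0.
by rewrite !big_cons; case: (Q q) => //; rewrite meetUr IH.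
Qed.

Lemma meets_compl_joins ys :
  \meet_(y <- ys) y = ~` \join_(p <- [seq ~` y | y <- ys]) p.
Proof. by rewrite compl_joins big_map; under eq_bigr do rewrite complK. Qed.

Fixpoint minterms xs : seq A :=
  if xs is x :: r then [seq x `&` l | l <- minterms r] ++ [seq ~` x `&` l | l <- minterms r]
  else [:: \top].

Lemma joins_minterms xs : \join_(l <- minterms xs) l = \top.
Proof.
elim: xs => [|x r IH]; first by rewrite big_cons big_nil joinx0.
by rewrite /= big_cat !big_map -!meetx_joins IH !meetx1; exact: joinxC.
Qed.

Lemma le_by_minterms xs z u : (forall l, l \in minterms xs -> z `&` l <= u) -> z <= u.
Proof.
move=> H; rewrite -[z]meetx1 -(joins_minterms xs) meetx_joins.
by apply/joinsP_seq => l lin _; apply: H.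
Qed.

Lemma minterm_decides xs l x : l \in minterms xs -> x \in xs -> (l <= x) || (l <= ~` x).
Proof.
elim: xs l => [|y r IH] l //=; rewrite mem_cat inE.
move=> /orP[] /mapP[l' l'r ->] /orP[/eqP->|xr]; rewrite ?leIl ?orbT //.
all: by case/orP: (IH l' l'r xr) => H; apply/orP; [left|right]; apply: le_trans H; rewrite leIr.
Qed.

Lemma le_join_minterms xs x : x \in xs ->
  x <= \join_(l <- minterms xs | (l <= x) && (l != \bot)) l.
Proof.
move=> xin; apply: le_by_minterms => l lin.
have /orP[lx|lnx] := minterm_decides lin xin; last first.
  by have /eqP-> : x `&` l == \bot by rewrite meetC disj_leC.
case: (eqVneq l \bot) => [->|lnb]; first by rewrite meetx0 le0x.
by apply: le_trans (leIr _ _) _; apply: joins_sup_seq; rewrite ?lx.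
Qed.

Lemma has_minterm_le xs x : x \in xs -> x != \bot ->
  has (fun l => (l <= x) && (l != \bot)) (minterms xs).
Proof.
move=> xin; apply: contraNT => /hasPn nl; rewrite -lex0.
apply: le_trans (le_join_minterms xin) _; apply/joinsP_seq => l lin lx.
by move: (nl l lin); rewrite lx.
Qed.

Definition is_small_cover (k : nat) c P xs : bool :=
  [&& (size P <= k)%N, all (fun p => (p <= c) && (p != \bot)) P
    & all (fun x => has (fun p => p <= x) P) xs].

Definition small_cover (k : nat) c xs : Prop := exists P, is_small_cover k c P xs.

Lemma uncovered_le_compl_joins k c xs K :
  ~ small_cover k c xs -> all (fun q => (q <= c) && (q != \bot)) K ->
  {in K & xs, forall q x, (q <= x) || (q <= ~` x)} ->
  forall P, {subset P <= K} -> (size P <= k)%N ->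
  exists2 x, x \in xs & x <= ~` \join_(p <- P) p.
Proof.
move=> nC Kc Kdec P sPK szP; apply: contrapT => nx; apply: nC; exists P.
rewrite /is_small_cover szP; apply/and3P; split=> //.
  by apply/allP => p /sPK; apply: (allP Kc).
apply/allP => x xin; apply: contrapT => /negP /hasPn np; apply: nx; exists x => //.
rewrite lexC; apply/joinsP_seq => p pP _.
by have /orP[px|] := Kdec p x (sPK _ pP) xin; first by move: (np p pP); rewrite px.
Qed.

Lemma nfilter_compl_joins (k : nat) (F : A -> Prop) xs K :
  (0 < k)%N -> is_nfilter k F -> {in xs, forall x, F x} ->
  (forall P, {subset P <= K} -> (size P <= k)%N ->
     exists2 x, x \in xs & x <= ~` \join_(p <- P) p) ->
  F (~` \join_(q <- K) q).
Proof.
move=> k0 [Fup Frule] Fxs HP.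
have small P : {subset P <= K} -> (size P <= k)%N -> F (~` \join_(p <- P) p).
  by move=> sPK szP; have [x xin xle] := HP P sPK szP; apply: Fup xle (Fxs x xin).
have [szK|szK] := leqP (size K) k; first exact: small.
have K0 : [seq ~` q | q <- K] != [::] by case: K szK {HP small}.
have -> : ~` \join_(q <- K) q = \meet_(y <- [seq ~` q | q <- K]) y.
  by rewrite big_map compl_joins.
apply: Frule => // [y|Y _ sY szY].
  move=> /mapP[q qK ->]; have := small [:: q]; rewrite big_seq1; apply=> //.
  by move=> p; rewrite inE => /eqP->.
rewrite meets_compl_joins; apply: small; last by rewrite size_map.
by move=> p /mapP[y /sY /mapP[q qK ->] ->]; rewrite complK.
Qed.

Lemma small_cover_of_nfilter (k : nat) (F : A -> Prop) a xs :
  (0 < k)%N -> is_nfilter k F -> ~ F a -> {in xs, forall x, F x} ->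
  small_cover k (~` a) xs.
Proof.
move=> k0 Fk Fa Fxs; apply: contrapT => nC; apply: Fa.
pose K := [seq l <- minterms (~` a :: xs) | (l <= ~` a) && (l != \bot)].
apply: Fk.1 (nfilter_compl_joins k0 Fk Fxs (uncovered_le_compl_joins (K := K) nC _ _)).
- by rewrite leCx big_filter; apply: le_join_minterms; rewrite inE eqxx.
- exact: filter_all.
- move=> q x; rewrite mem_filter => /andP[_ qin] xin.
  by apply: minterm_decides qin _; rewrite inE xin orbT.
Qed.

Definition delta_condition (n : nat) (F : A -> Prop) : Prop :=
  forall k, (n <= k)%N -> forall xs : seq A, size xs = k ->
    (forall Phi : seq A, Phi != [::] -> {subset Phi <= Delta xs} ->
       (size Phi <= n)%N -> F (\meet_(y <- Phi) y)) ->
    F \bot.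

Lemma small_cover_of_delta (n : nat) (F : A -> Prop) xs :
  is_upset F -> ~ F \bot -> delta_condition n F -> {in xs, forall x, F x} ->
  small_cover n \top xs.
Proof.
move=> Fup Fb HD Fxs; apply: contrapT => nC.
pose K := [seq l <- minterms xs | l != \bot].
have Kc : all (fun q => (q <= \top) && (q != \bot)) K.
  by apply/allP => q; rewrite mem_filter lex1 => /andP[].
have Kdec : {in K & xs, forall q x, (q <= x) || (q <= ~` x)}.
  by move=> q x; rewrite mem_filter => /andP[_]; apply: minterm_decides.
have xK x : x \in xs -> x <= \join_(q <- K) q.
  move=> xin; apply: le_trans (le_join_minterms xin) _; rewrite big_filter.
  by apply/joinsP_seq => l lin /andP[_ lb]; apply: joins_sup_seq.
have [szK|szK] := leqP (size K) n.
  apply: nC; exists K; rewrite /is_small_cover szK Kc /=.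
  apply/allP => x xin.
  have xb : x != \bot by apply/eqP => xb; apply: Fb; rewrite -xb; exact: Fxs.
  have /hasP[l lin /andP[lx lb]] := has_minterm_le xin xb.
  by apply/hasP; exists l; rewrite ?mem_filter ?lin ?lb.
apply: Fb; apply: (HD _ (ltnW szK) [seq ~` q | q <- K] (size_map _ _)).
move=> Phi _ sPhi szPhi.
pose Phi' := [seq phi <- Phi | phi \in [seq ~` q | q <- K]].
pose P := [seq ~` phi | phi <- Phi'].
have sPK : {subset P <= K}.
  by move=> p /mapP[phi]; rewrite mem_filter => /andP[/mapP[q qK ->] _ ->]; rewrite complK.
have szP : (size P <= n)%N.
  by rewrite size_map size_filter (leq_trans (count_size _ _)).
have [x xin xle] := uncovered_le_compl_joins nC Kc Kdec sPK szP.
apply: Fup (Fxs x xin); apply/meetsP_seq => phi phin _.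
have := sPhi _ phin; rewrite inE => /orP[/eqP->|phiK].
  by rewrite compl_meets big_map; under eq_bigr do rewrite complK; exact: xK.
apply: le_trans xle _; rewrite -[phi]complK leC.
by rewrite (big_rem (~` phi)) ?leUl // map_f // mem_filter phin phiK.
Qed.

End BooleanAlgebra.

(** * Ultrafilters covering a set *)

Lemma bigcup_chain_seq (T : eqType) (Fam : set (set T)) (ys : seq T) :
  total_on Fam subset -> {in ys, forall y, (\bigcup_(g in Fam) g)%classic y} ->
  ys = [::] \/ exists2 g, Fam g & {in ys, forall y, g y}.
Proof.
move=> tot; elim: ys => [|y ys IH] H; first by left.
right; have [g1 Fg1 g1y] := H y (mem_head _ _).
have [|->|[g2 Fg2 g2ys]] := IH; first by move=> z zin; apply: H; rewrite inE zin orbT.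
  by exists g1 => // z; rewrite inE => /eqP->.
have [s12|s21] := tot _ _ Fg1 Fg2.
  by exists g2 => // z; rewrite inE => /predU1P[->|/g2ys]; [apply: s12|].
by exists g1 => // z; rewrite inE => /predU1P[->|/g2ys /s21].
Qed.

Section Ultrafilters.
Context {d : Order.disp_t} {A : ctbDistrLatticeType d}.
Implicit Types (b c x y : A) (xs ys P : seq A) (F g w : A -> Prop).

Definition is_ultrafilter w : Prop :=
  (forall b, w b \/ w (~` b)) /\
  (forall ys, {in ys, forall y, w y} -> \meet_(y <- ys) y != \bot).

Section UltrafilterTheory.
Variable w : A -> Prop.
Hypothesis wU : is_ultrafilter w.

Lemma ultrafilter_meet2_neq0 x y : w x -> w y -> x `&` y != \bot.
Proof.
move=> wx wy; have wxy : {in [:: x; y], forall z, w z}.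
  by move=> z; rewrite !inE => /orP[] /eqP->.
by have := wU.2 _ wxy; rewrite !big_cons big_nil meetx1.
Qed.

Lemma ultrafilter_compl x : w (~` x) <-> ~ w x.
Proof.
split=> [wc wx|]; last by case: (wU.1 x).
by have := ultrafilter_meet2_neq0 wx wc; rewrite meetxC eqxx.
Qed.

Lemma ultrafilter_le x y : x <= y -> w x -> w y.
Proof.
move=> xy wx; apply: contrapT => /ultrafilter_compl wy.
by have := ultrafilter_meet2_neq0 wx wy; rewrite disj_leC complK xy.
Qed.

Lemma ultrafilter_meet x y : w (x `&` y) <-> w x /\ w y.
Proof.
split=> [wxy|[wx wy]]; first by split; apply: ultrafilter_le wxy; rewrite ?leIl ?leIr.
apply: contrapT => /ultrafilter_compl wc.
have wxyc : {in [:: x; y; ~` (x `&` y)], forall z, w z}.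
  by move=> z; rewrite !inE => /or3P[] /eqP->.
by have := wU.2 _ wxyc; rewrite !big_cons big_nil meetx1 meetA meetxC eqxx.
Qed.

Lemma ultrafilter_join x y : w (x `|` y) <-> w x \/ w y.
Proof.
rewrite -[x `|` y]complK complU ultrafilter_compl ultrafilter_meet !ultrafilter_compl.
split=> [/not_andP[] /contrapT|[] wxy [nx ny]]; by [left|right|apply: nx|apply: ny].
Qed.

Lemma ultrafilter_bot : ~ w \bot.
Proof. by move=> wb; have := ultrafilter_meet2_neq0 wb wb; rewrite meetxx eqxx. Qed.

Lemma ultrafilter_top : w \top.
Proof. by case: (wU.1 \top) => //; rewrite compl1 => /ultrafilter_bot. Qed.

End UltrafilterTheory.

Lemma le_meets_setU1 g b ys p :
  p <= \meet_(y <- [seq y <- ys | `[< g y >]]) y -> p <= b ->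
  {in ys, forall y, g y \/ y = b} -> p <= \meet_(y <- ys) y.
Proof.
move=> pg pb gys; apply/meetsP_seq => y yin _.
case: (gys y yin) => [gy|->//]; apply: le_trans pg _.
by apply: meets_inf_seq; rewrite // mem_filter yin andbT; apply/asboolP.
Qed.

Lemma is_small_cover_subset k c P xs xs' :
  {subset xs' <= xs} -> is_small_cover k c P xs -> is_small_cover k c P xs'.
Proof.
move=> sxs /and3P[szP Pc /allP cov]; rewrite /is_small_cover szP Pc /=.
by apply/allP => x /sxs; apply: cov.
Qed.

Lemma is_small_cover_head k c p p' P xs : p' <= p -> p' != \bot ->
  is_small_cover k c (p :: P) xs -> is_small_cover k c (p' :: P) xs.
Proof.
move=> p'p p'0 /and3P[szP /= /andP[/andP[pc _] Pc] /allP cov].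
rewrite /is_small_cover szP /= (le_trans p'p pc) p'0 Pc /=.
apply/allP => x /cov /orP[px|]; last by rewrite orbC => ->.
by rewrite (le_trans p'p px).
Qed.

(* [cover_base k c F g]: [g] can serve as the base of the first of [k + 1]
   ultrafilters containing [c] whose union covers [F]. *)
Definition cover_base (k : nat) c F g : Prop :=
  forall xs ys, {in xs, forall x, F x} -> {in ys, forall y, g y} ->
  exists p P, p <= \meet_(y <- ys) y /\ is_small_cover k.+1 c (p :: P) xs.

Section CoverBase.
Variables (k : nat) (c : A) (F : A -> Prop).

Lemma cover_base_set0 : c != \bot ->
  (forall xs, {in xs, forall x, F x} -> small_cover k.+1 c xs) ->
  cover_base k c F set0.
Proof.
move=> c0 HC xs [|y ys] Fxs ys0; last by case: (ys0 y (mem_head _ _)).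
have [[|p P] cov] := HC xs Fxs; last by exists p, P; rewrite big_nil lex1.
exists c, [::]; rewrite big_nil lex1 /is_small_cover /= lexx c0 /=.
by case/and3P: cov; case: xs {Fxs}.
Qed.

Lemma cover_base_bigcup : c != \bot ->
  (forall xs, {in xs, forall x, F x} -> small_cover k.+1 c xs) ->
  forall Fam : set (set A), (Fam `<=` cover_base k c F)%classic ->
  total_on Fam subset -> cover_base k c F (\bigcup_(g in Fam) g)%classic.
Proof.
move=> c0 HC Fam sub tot xs ys Fxs gys.
have [->|[g Fg gys']] := bigcup_chain_seq tot gys; last exact: (sub g Fg).
by apply: cover_base_set0 => // y; rewrite in_nil.
Qed.

Lemma cover_base_setU1 g b : cover_base k c F g ->
  cover_base k c F (g `|` [set b])%classic \/
  cover_base k c F (g `|` [set (~` b)%O])%classic.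
Proof.
move=> Gg; apply: contrapT => /not_orP[].
move=> /existsNP[xs1 /existsNP[ys1 /not_implyP[F1 /not_implyP[g1 n1]]]].
move=> /existsNP[xs2 /existsNP[ys2 /not_implyP[F2 /not_implyP[g2 n2]]]].
pose gs ys := [seq y <- ys | `[< g y >]].
have HF : {in xs1 ++ xs2, forall x, F x}.
  by move=> x; rewrite mem_cat => /orP[]; [apply: F1|apply: F2].
have Hg : {in gs ys1 ++ gs ys2, forall y, g y}.
  by move=> y; rewrite mem_cat !mem_filter => /orP[] /andP[/asboolP].
have [p [P [pm cov]]] := Gg _ _ HF Hg; rewrite big_cat /= in pm.
have [pb|npb] := boolP (p <= ~` b).
  apply: n2; exists p, P; split.
    exact: le_meets_setU1 (le_trans pm (leIr _ _)) pb g2.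
  by apply: is_small_cover_subset cov => x; rewrite mem_cat orbC => ->.
apply: n1; exists (p `&` b), P; split.
  exact: le_meets_setU1 (le_trans (leIl _ _) (le_trans pm (leIl _ _))) (leIr _ _) g1.
apply: is_small_cover_head (leIl _ _) _ (is_small_cover_subset _ cov).
  by apply: contraNneq npb => /eqP; rewrite disj_leC.
by move=> x; rewrite mem_cat => ->.
Qed.

Lemma maximal_cover_base_ultrafilter g : cover_base k c F g ->
  (forall B, (g `<` B)%classic -> ~ cover_base k c F B) ->
  is_ultrafilter g /\ g c.
Proof.
move=> Gg gmax; have F0 : {in [::], forall x, F x} by move=> x; rewrite in_nil.
have gcomp b : g b \/ g (~` b).
  have ext x : ~ g x -> (g `<` g `|` [set x])%classic.
    by move=> gx; split=> [y gy|/(_ x (or_intror erefl))]; [left|].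
  apply: contrapT => /not_orP[nb nc].
  by case: (cover_base_setU1 b Gg) => /gmax; apply; apply: ext.
split; first split=> // ys gys.
  have [p [P [pm /and3P[_ /= /andP[/andP[_ p0] _] _]]]] := Gg [::] ys F0 gys.
  by apply: contra p0 => /eqP ys0; rewrite -lex0 -ys0.
case: (gcomp c) => // gc.
have gc' : {in [:: ~` c], forall y, g y} by move=> y; rewrite inE => /eqP->.
have [p [P [pm /and3P[_ /= /andP[/andP[pc p0] _] _]]]] := Gg [::] _ F0 gc'.
by move: p0; rewrite big_seq1 in pm; rewrite -lex0 -(meetxC c) lexI pc pm.
Qed.

Lemma small_cover_outside g : is_ultrafilter g -> cover_base k c F g ->
  forall xs, {in xs, forall x, F x /\ ~ g x} -> small_cover k c xs.
Proof.
move=> gU Gg xs Fxs.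
have HF : {in xs, forall x, F x} by move=> x /Fxs[].
have Hg : {in [seq ~` x | x <- xs], forall y, g y}.
  by move=> y /mapP[x /Fxs[_ gx] ->]; apply/(ultrafilter_compl gU).
have [p [P [pm /and3P[szP /= /andP[/andP[_ p0] Pc] /allP cov]]]] := Gg _ _ HF Hg.
exists P; rewrite /is_small_cover -ltnS szP Pc /=; apply/allP => x xin.
have /orP[px|//] := cov x xin; case/negP: p0; rewrite -lex0 -(meetxC x) lexI px /=.
by apply: le_trans pm _; apply: meets_inf_seq; rewrite // map_f.
Qed.

End CoverBase.

Lemma ultrafilters_cover (k : nat) c F : c != \bot ->
  (forall xs, {in xs, forall x, F x} -> small_cover k c xs) ->
  exists U : nat -> A -> Prop,
    (forall j, (j < k)%N -> is_ultrafilter (U j) /\ U j c) /\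
    (forall x, F x -> exists2 j, (j < k)%N & U j x).
Proof.
elim: k F => [|k IH] F c0 HC.
  exists (fun _ _ => True); split=> // x Fx.
  have [|P /and3P[szP _ cov]] := HC [:: x]; first by move=> y; rewrite inE => /eqP->.
  by move: szP cov; rewrite leqn0 => /nilP->.
have [g [Gg gmax]] := Zorn_bigcup (cover_base_bigcup c0 HC).
have [gU gc] := maximal_cover_base_ultrafilter Gg gmax.
have [U [UU Ucov]] := IH (fun x => F x /\ ~ g x) c0 (small_cover_outside gU Gg).
exists (fun j => if j is j'.+1 then U j' else g); split; first by case.
move=> x Fx; have [gx|ngx] := pselect (g x); first by exists 0%N.
by have [j jk Ujx] := Ucov x (conj Fx ngx); exists j.+1.
Qed.

Lemma exists_ultrafilter c : c != \bot -> exists w, is_ultrafilter w /\ w c.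
Proof.
move=> c0; have [|U [UU _]] := ultrafilters_cover (k := 1) (F := set0) c0.
  by move=> [|x xs] Fxs; [exists [::] | case: (Fxs x (mem_head _ _))].
by exists (U 0%N); apply: UU.
Qed.

Lemma ultrafilters_le x y :
  (forall w, is_ultrafilter w -> w x -> w y) -> x <= y.
Proof.
move=> H; apply: contrapT => /negP nxy.
have [|w [wU /(ultrafilter_meet wU)[wx /(ultrafilter_compl wU)[]]]] :=
  exists_ultrafilter (c := x `&` ~` y); last exact: H.
by rewrite disj_leC complK.
Qed.

End Ultrafilters.

(** * Homomorphisms into B_m x B_n and its powers *)

Lemma in_meets_set (T : finType) (s : seq {set T}) t :
  (t \in \meet_(x <- s) x) = all (fun x : {set T} => t \in x) s.
Proof.
elim: s => [|x s IH]; first by rewrite big_nil /= -(finset.in_setT t).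
by rewrite big_cons /= -IH -finset.in_setI.
Qed.

Lemma ordinal_set_neq0 k (Q : nat -> Prop) :
  [set j : 'I_k | `[< Q j >]] != \bot <-> exists2 j, (j < k)%N & Q j.
Proof.
split=> [/set0Pn[j]|[j jk Qj]]; first by rewrite inE => /asboolP; exists j.
by apply/set0Pn; exists (Ordinal jk); rewrite inE; apply/asboolP.
Qed.

Lemma is_ba_hom_pair {d1 d2 d3 : Order.disp_t} {A : ctbDistrLatticeType d1}
    {B1 : ctbDistrLatticeType d2} {B2 : ctbDistrLatticeType d3}
    (h1 : A -> B1) (h2 : A -> B2) :
  is_ba_hom h1 -> is_ba_hom h2 -> is_ba_hom (fun x => (h1 x, h2 x) : B1 *p B2).
Proof.
move=> [h1I [h1U [h1C [h10 h11]]]] [h2I [h2U [h2C [h20 h21]]]].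
by do ![split] => *; rewrite ?(h1I, h1U, h1C, h10, h11, h2I, h2U, h2C, h20, h21).
Qed.

Section UltrafilterHoms.
Context {d : Order.disp_t} {A : ctbDistrLatticeType d}.

Lemma ultrafilter_indicator_hom (k : nat) (U : nat -> A -> Prop) :
  (forall j, (j < k)%N -> is_ultrafilter (U j)) ->
  is_ba_hom (fun x => [set j : 'I_k | `[< U j x >]]).
Proof.
move=> UU; split; [|split; [|split; [|split]]] => [x y|x y|x||];
  apply/setP => j; rewrite !inE; have Uj := UU j (ltn_ord j).
- by rewrite -asbool_and; apply/asbool_equiv_eq/ultrafilter_meet.
- by rewrite -asbool_or; apply/asbool_equiv_eq/ultrafilter_join.
- by rewrite -asbool_neg; apply/asbool_equiv_eq/ultrafilter_compl.
- exact: asboolF (ultrafilter_bot Uj).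
- exact: asboolT (ultrafilter_top Uj).
Qed.

Variables m n : nat.

Definition ultrafilter_hom (U V : nat -> A -> Prop) (x : A) : salg (BmBn m n) :=
  ([set j : 'I_m | `[< U j x >]], [set j : 'I_n | `[< V j x >]]).

Lemma ultrafilter_hom_is_hom U V :
  (forall j, (j < m)%N -> is_ultrafilter (U j)) ->
  (forall j, (j < n)%N -> is_ultrafilter (V j)) ->
  is_ba_hom (ultrafilter_hom U V).
Proof.
by move=> UU VU; apply: is_ba_hom_pair; apply: ultrafilter_indicator_hom.
Qed.

Lemma sfilt_ultrafilter_hom U V x :
  sfilt (BmBn m n) (ultrafilter_hom U V x) <->
  (exists2 j, (j < m)%N & U j x) /\ (exists2 j, (j < n)%N & V j x).
Proof.
rewrite /=; split=> -[Ux Vx]; split;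
  by [apply/(ordinal_set_neq0 _ (U^~ x)) | apply/(ordinal_set_neq0 _ (V^~ x))].
Qed.

Lemma BmBn_hom_rejecting (F : A -> Prop) a :
  (0 < m)%N -> is_nfilter m F -> delta_condition n F -> F \top -> ~ F a ->
  exists h : A -> salg (BmBn m n), [/\ is_ba_hom h,
    forall x, F x -> sfilt (BmBn m n) (h x) & ~ sfilt (BmBn m n) (h a)].
Proof.
move=> m0 Fm HD Ftop Fa.
have Fb : ~ F \bot by move=> Fb; apply: Fa; apply: Fm.1 Fb; apply: le0x.
have ca : ~` a != \bot by apply/eqP => ca; apply: Fa; rewrite -[a]complK ca compl0.
have t0 : \top != \bot :> A by apply/eqP => t0; apply: Fb; rewrite -t0.
have [U [UU Ucov]] := ultrafilters_cover (F := F) ca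
  (fun xs Fxs => small_cover_of_nfilter m0 Fm Fa Fxs).
have [V [VU Vcov]] := ultrafilters_cover (F := F) t0
  (fun xs Fxs => small_cover_of_delta Fm.1 Fb HD Fxs).
exists (ultrafilter_hom U V); split.
- by apply: ultrafilter_hom_is_hom => j jk; [case: (UU j jk)|case: (VU j jk)].
- by move=> x Fx; apply/sfilt_ultrafilter_hom; split; [apply: Ucov|apply: Vcov].
move=> /sfilt_ultrafilter_hom[[j jm Uja] _].
by have [Uu /(ultrafilter_compl Uu)] := UU j jm.
Qed.

End UltrafilterHoms.

(* The power [B_m x B_n]^I is represented by the subsets of
   [I * ('I_m + 'I_n)]. *)
Section PowerOfBmBn.
Variables (m n : nat) (I : Type).

Definition power_proj (i : I) (X : set (I * ('I_m + 'I_n))) : salg (BmBn m n) :=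
  ([set j | `[< X (i, inl j) >]], [set j | `[< X (i, inr j) >]]).

Definition power_tuple (f : I -> salg (BmBn m n)) : set (I * ('I_m + 'I_n)) :=
  fun z => match z.2 with inl j => j \in (f z.1).1 | inr j => j \in (f z.1).2 end.

Lemma power_projK f i : power_proj i (power_tuple f) = f i.
Proof.
by rewrite /power_proj /power_tuple /=; case: (f i) => a b; congr pair;
  apply/setP => j; rewrite inE asboolb.
Qed.

Lemma power_proj_inj X Y : (forall i, power_proj i X = power_proj i Y) -> X = Y.
Proof.
move=> XY; apply: funext => -[i j]; apply: propext.
have [/setP E1 /setP E2] := XY i.
by case: j => j; apply: asbool_eq_equiv; [move: (E1 j)|move: (E2 j)]; rewrite !inE.
Qed.

Lemma power_proj_hom i : is_ba_hom (power_proj i).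
Proof.
split; [|split; [|split; [|split]]] => *; congr pair; apply/setP => j; rewrite !inE.
all: by [rewrite -asbool_and | rewrite -asbool_or | rewrite -asbool_neg
        | rewrite asboolF | rewrite asboolT].
Qed.

Lemma power_tuple_hom {d : Order.disp_t} {A : ctbDistrLatticeType d}
    (h : I -> A -> salg (BmBn m n)) :
  (forall i, is_ba_hom (h i)) -> is_ba_hom (fun x => power_tuple (fun i => h i x)).
Proof.
move=> hh; have E i x : power_proj i (power_tuple (fun i => h i x)) = h i x.
  exact: power_projK.
split; [|split; [|split; [|split]]] => *; apply: power_proj_inj => i;
  case: (power_proj_hom i) => pI [pU [pC [p0 p1]]];
  case: (hh i) => hI [hU [hC [h0 h1]]];
  by rewrite ?(pI, pU, pC, p0, p1) !E ?(hI, hU, hC, h0, h1).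
Qed.

End PowerOfBmBn.

Lemma full_in_filter_class (K : structure -> Prop) (S : structure) :
  filter_class_closed K -> (forall x, sfilt S x) -> K S.
Proof.
move=> [_ [Kpre Kprod]] Sfull.
(* The empty product is the one-element structure, and [S] is a strict
   preimage of it. *)
pose Triv := @Structure _ (set False) (fun _ => True).
have triv_eq (X Y : set False) : X = Y by apply: funext => -[].
have KTriv : K Triv.
  apply: (Kprod Triv False (fun i : False => match i with end)) => [[]|].
  exists (fun i : False => match i with end); split=> [[]|].
  split=> [f|a]; last by split=> // _ [].
  by exists set0; split=> [[]|b _]; apply: triv_eq.
apply: (Kpre S Triv KTriv); exists (fun _ => set0); split.
  by split; [|split; [|split; [|split]]] => *; apply: triv_eq.
by split=> [y|x]; [exists \bot; apply: triv_eq|].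
Qed.

Lemma subdirect_power_in_class (K : structure -> Prop) m n (I : Type)
    (Fi : I -> salg (BmBn m n) -> Prop) (S : structure)
    (h : I -> salg S -> salg (BmBn m n)) :
  filter_class_closed K -> (forall i, K (@Structure _ (salg (BmBn m n)) (Fi i))) ->
  (forall i, is_ba_hom (h i)) -> (forall x y, (forall i, h i x = h i y) -> x = y) ->
  (forall x, sfilt S x <-> forall i, Fi i (h i x)) -> K S.
Proof.
move=> [Kemb [_ Kprod]] KT hh hinj hstrict.
pose Prod := @Structure _ (set (I * ('I_m + 'I_n)))
  (fun X => forall i, Fi i (power_proj i X)).
have KProd : K Prod.
  apply: (Kprod Prod I _ KT); exists (@power_proj m n I).
  split; first exact: power_proj_hom.
  split=> // f; exists (power_tuple f); split=> [i|b Hb]; first exact: power_projK.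
  by apply: power_proj_inj => i; rewrite Hb power_projK.
apply: (Kemb S Prod KProd); exists (fun x => power_tuple (fun i => h i x)).
split; first exact: power_tuple_hom.
split=> [x y E|x].
  by apply: hinj => i; have := congr1 (power_proj i) E; rewrite !power_projK.
split=> [/hstrict Sx i|H]; first by rewrite power_projK.
by apply/hstrict => i; have := H i; rewrite power_projK.
Qed.

Lemma subset_map_lift (T1 T2 : eqType) (h : T1 -> T2) (X : seq T1) (Y : seq T2) :
  {subset Y <= map h X} -> exists2 Y', {subset Y' <= X} & map h Y' = Y.
Proof.
elim: Y => [|y Y IH] sY; first by exists [::].
have [|Y' sY'X <-] := IH; first by move=> z zY; apply: sY; rewrite inE zY orbT.
have /mapP[x xX ->] := sY y (mem_head _ _).
by exists (x :: Y') => // z; rewrite inE => /predU1P[->|/sY'X].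
Qed.

Section NFilterPullback.
Context {d1 d2 : Order.disp_t} {A : ctbDistrLatticeType d1} {B : ctbDistrLatticeType d2}.
Variable h : A -> B.
Hypothesis hh : is_ba_hom h.

Lemma ba_hom_le x y : x <= y -> h x <= h y.
Proof. by move/meet_idPl => xy; apply/meet_idPl; rewrite -hh.1 xy. Qed.

Lemma ba_hom_meets (Y : seq A) : h (\meet_(y <- Y) y) = \meet_(y <- map h Y) y.
Proof.
elim: Y => [|y Y IH]; first by rewrite !big_nil; case: hh => _ [_ [_ [_ ->]]].
by rewrite /= !big_cons hh.1 IH.
Qed.

Lemma nfilter_comp (k : nat) (G : B -> Prop) :
  is_nfilter k G -> is_nfilter k (fun x => G (h x)).
Proof.
move=> [Gup Grule]; split=> [x y /ba_hom_le xy|X X0 HX HY]; first exact: Gup xy.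
rewrite ba_hom_meets; apply: Grule.
- by case: X X0 {HX HY}.
- by move=> _ /mapP[x xX ->]; apply: HX.
move=> Y Y0 sY szY; have [Y' sY'X eY] := subset_map_lift sY.
rewrite -eY -ba_hom_meets; apply: HY => //; last by rewrite -(size_map h) eY.
by apply: contraNneq Y0 => Y'0; rewrite -eY Y'0.
Qed.

End NFilterPullback.

Section NFilters.
Context {d : Order.disp_t} {A : ctbDistrLatticeType d}.

Lemma nfilter_bigcap (I : Type) (k : nat) (G : I -> A -> Prop) :
  (forall i, is_nfilter k (G i)) -> is_nfilter k (fun x => forall i, G i x).
Proof.
move=> Gk; split=> [x y xy Gx i|X X0 HX HY i]; first exact: (Gk i).1 xy (Gx i).
by apply: (Gk i).2 => // [x /HX|Y Y0 sY /(HY Y Y0 sY)].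
Qed.

Lemma nfilter_and (k : nat) (G1 G2 : A -> Prop) :
  is_nfilter k G1 -> is_nfilter k G2 -> is_nfilter k (fun x => G1 x /\ G2 x).
Proof.
move=> G1k G2k.
suff -> : (fun x => G1 x /\ G2 x) = (fun x => forall b : bool, (if b then G1 else G2) x).
  by apply: nfilter_bigcap; case.
apply: funext => x; apply: propext.
by split=> [[? ?] []|H] //; split; [apply: (H true)|apply: (H false)].
Qed.

Lemma nfilter_leq (k l : nat) (F : A -> Prop) :
  (k <= l)%N -> is_nfilter k F -> is_nfilter l F.
Proof.
move=> kl [Fup Frule]; split=> // X X0 HX HY; apply: Frule => // Y Y0 sY szY.
by apply: HY => //; apply: leq_trans szY kl.
Qed.

End NFilters.

Lemma nfilter_set_neq0 (T : finType) : is_nfilter #|T| (fun X : {set T} => X != \bot).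
Proof.
split=> [X Y XY /set0Pn[t tX]|X X0 HX HY].
  by apply/set0Pn; exists t; apply: (fintype.subsetP XY).
apply/negP => /eqP meet0.
have [x0 x0X] : exists x0, x0 \in X.
  by case: X X0 {HX HY meet0} => // x0 X _; exists x0; rewrite inE eqxx.
have /set0Pn[t0 _] := HX x0 x0X.
pose pick t := nth \bot X (find (predC (fun x : {set T} => t \in x)) X).
have pickP t : pick t \in X /\ t \notin pick t.
  have : has (predC (fun x : {set T} => t \in x)) X.
    by rewrite has_predC -in_meets_set meet0 inE.
  by move=> hX; split; [rewrite mem_nth // -has_find | have := nth_find \bot hX].
pose Y := [seq pick t | t <- enum T].
have Y0 : Y != [::].
  by rewrite -size_eq0 size_map -cardE -lt0n; apply/card_gt0P; exists t0.
have sYX : {subset Y <= X} by move=> _ /mapP[t _ ->]; case: (pickP t).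
have szY : (size Y <= #|T|)%N by rewrite size_map -cardE.
have /set0Pn[t] := HY Y Y0 sYX szY.
rewrite in_meets_set => /allP tY; have [_ /negP[]] := pickP t.
by apply: tY; rewrite map_f ?mem_enum.
Qed.

Definition below_proper_nfilter {d : Order.disp_t} {A : ctbDistrLatticeType d}
    (n : nat) (F : A -> Prop) : Prop :=
  exists G : A -> Prop, is_nfilter n G /\ (exists a, ~ G a) /\ (forall a, F a -> G a).

Definition BA_mn (m n : nat) (S : structure) : Prop :=
  is_nfilter m (sfilt S) /\ (exists a, sfilt S a) /\
  ((forall a, sfilt S a) \/ below_proper_nfilter n (sfilt S)).

Lemma proper_upset_bot {d : Order.disp_t} {A : ctbDistrLatticeType d} (G : A -> Prop) :
  is_upset G -> (exists a, ~ G a) -> ~ G \bot.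
Proof. by move=> Gup [a Ga] G0; apply: Ga; apply: Gup G0; apply: le0x. Qed.

Lemma BA_mn_pull m n (S T : structure) (h : salg S -> salg T) :
  is_ba_hom h -> strict_map S T h -> BA_mn m n T -> BA_mn m n S.
Proof.
move=> hh hS [Tm [[a Ta] Tc]]; rewrite /BA_mn.
have -> : sfilt S = (fun x => sfilt T (h x)) by apply: funext => x; apply: propext.
split; first exact: nfilter_comp.
split; first by exists \top; rewrite hh.2.2.2.2; apply: Tm.1 Ta; apply: lex1.
case: Tc => [Tfull|[G [Gn [Gp TG]]]]; [by left|right].
exists (fun x => G (h x)); split; first exact: nfilter_comp.
split=> [|x /TG //]; exists \bot; rewrite hh.2.2.2.1; exact: proper_upset_bot Gn.1 Gp.
Qed.

Lemma BA_mn_closed m n : filter_class_closed (BA_mn m n).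
Proof.
split; [|split]; [| |move=> S I T BT [p [ph [_ pS]]]].
  1,2: by move=> S T BT [h [hh [_ hS]]]; apply: BA_mn_pull hS BT.
rewrite /BA_mn; have -> : sfilt S = (fun x => forall i, sfilt (T i) (p i x)).
  by apply: funext => x; apply: propext.
split; first by apply: nfilter_bigcap => i; apply: nfilter_comp; case: (BT i).
split.
  exists \top => i; rewrite (ph i).2.2.2.2.
  by have [Tm [[a Ta] _]] := BT i; apply: Tm.1 Ta; apply: lex1.
have [Tfull|/existsNP[i0 /existsNP[y ny]]] := pselect (forall i y, sfilt (T i) y).
  by left=> x i; apply: Tfull.
have [_ [_ [Tfull|[G [Gn [Gp TG]]]]]] := BT i0; first by case: ny.
right; exists (fun x => G (p i0 x)); split; first exact: nfilter_comp.
split; last by move=> x /(_ i0)/TG.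
by exists \bot; rewrite (ph i0).2.2.2.1; exact: proper_upset_bot Gn.1 Gp.
Qed.

Lemma BA_mn_BmBn m n : (0 < n)%N -> (n < m)%N -> BA_mn m n (BmBn m n).
Proof.
move=> n0 nm; have m0 := ltn_trans n0 nm.
have fst_hom : is_ba_hom (fun x : salg (BmBn m n) => x.1).
  by split; [|split; [|split; [|split]]].
have snd_hom : is_ba_hom (fun x : salg (BmBn m n) => x.2).
  by split; [|split; [|split; [|split]]].
have Pm := nfilter_set_neq0 'I_m; rewrite card_ord in Pm.
have Pn := nfilter_set_neq0 'I_n; rewrite card_ord in Pn.
have Gn := nfilter_comp snd_hom Pn.
split; first exact: nfilter_and (nfilter_comp fst_hom Pm) (nfilter_leq (ltnW nm) Gn).
split; first by exists \top; split; apply/set0Pn; [exists (Ordinal m0)|exists (Ordinal n0)].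
right; exists (fun x : salg (BmBn m n) => x.2 != \bot); split=> //.
by split=> [|x []//]; exists \bot; rewrite eqxx.
Qed.

Lemma delta_condition_of_BA_mn m n (S : structure) :
  (0 < n)%N -> BA_mn m n S -> delta_condition n (sfilt S).
Proof.
move=> n0 [_ [_ [Sfull|[G [[Gup Grule] [Gp FG]]]]]] k _ xs _ HPhi; first exact: Sfull.
exfalso; apply: (proper_upset_bot Gup Gp).
have -> : \bot = \meet_(y <- Delta xs) y :> salg S by rewrite big_cons meetCx.
apply: Grule => // [x xin|Y Y0 sY szY]; last exact/FG/HPhi.
apply: FG; have := HPhi [:: x] isT; rewrite big_seq1; apply=> //.
by move=> y; rewrite inE => /eqP->.
Qed.

Lemma gen_filter_class_of_delta m n (S : structure) : (0 < n)%N -> (n < m)%N ->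
  is_nfilter m (sfilt S) -> (exists a, sfilt S a) -> delta_condition n (sfilt S) ->
  gen_filter_class (BmBn m n) S.
Proof.
move=> n0 nm Sm [a0 Sa0] HD K HK KB; have m0 := ltn_trans n0 nm.
have Stop : sfilt S \top by apply: Sm.1 Sa0; apply: lex1.
pose I := ({h : salg S -> salg (BmBn m n) |
             is_ba_hom h /\ forall x, sfilt S x -> sfilt (BmBn m n) (h x)} +
          {h : salg S -> salg (BmBn m n) | is_ba_hom h})%type.
pose hI (i : I) := match i with inl h => sval h | inr h => sval h end.
pose Fi (i : I) := match i with
  | inl _ => sfilt (BmBn m n) | inr _ => fun _ => True end.
apply: (subdirect_power_in_class (h := hI) (Fi := Fi) HK).
- by case=> i; [exact: KB|exact: full_in_filter_class].
- by case=> -[h hh] //; case: hh.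
- move=> x y hxy; have sep w : is_ultrafilter w -> w x = w y.
    move=> wU; pose hw := ultrafilter_hom m n (fun _ => w) (fun _ => w).
    have hwH : is_ba_hom hw by apply: ultrafilter_hom_is_hom => j _.
    have [/finset.setP/(_ (Ordinal m0)) + _] := hxy (inr (exist _ hw hwH)).
    by rewrite !inE => wxy; exact: propext (asbool_eq_equiv wxy).
  by apply/le_anti/andP; split; apply: ultrafilters_le => w /sep ->.
move=> x; split=> [Sx [[h [_ hS]]|]|H] //=; first exact: hS.
apply: contrapT => nSx; have [h [hh hS hx]] := BmBn_hom_rejecting m0 Sm HD Stop nSx.
exact: hx (H (inl (exist _ h (conj hh hS)))).
Qed.

Theorem mainTheorem18 (m n : nat) :
  (1 <= n)%N -> (n < m)%N ->
  forall S : structure,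
    (gen_filter_class (BmBn m n) S <->
       (is_nfilter m (sfilt S) /\ (exists a, sfilt S a) /\
        ((forall a, sfilt S a) \/
         exists G : salg S -> Prop,
           is_nfilter n G /\ (exists a, ~ G a) /\
           (forall a, sfilt S a -> G a)))) /\
    (gen_filter_class (BmBn m n) S <->
       (is_nfilter m (sfilt S) /\ (exists a, sfilt S a) /\
        forall (k : nat), (n <= k)%N ->
        forall xs : seq (salg S), size xs = k ->
          (forall Phi : seq (salg S), Phi != [::] -> {subset Phi <= Delta xs} ->
              (size Phi <= n)%N -> sfilt S (\meet_(y <- Phi) y)) ->
          sfilt S \bot)).
Proof.
move=> n0 nm S.
have gen_BA : gen_filter_class (BmBn m n) S -> BA_mn m n S.
  by move=> gen; apply: gen; [exact: BA_mn_closed|exact: BA_mn_BmBn].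
have BA_delta := @delta_condition_of_BA_mn m n S n0.
split; split.
- exact: gen_BA.
- move=> BA; have [Sm [Sne _]] := BA.
  exact: gen_filter_class_of_delta (BA_delta BA).
- by move=> /gen_BA BA; have [Sm [Sne _]] := BA; split; [|split; last exact: BA_delta].
- by move=> [Sm [Sne HD]]; exact: gen_filter_class_of_delta.
Qed.
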